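(* Let $k$ be a field of characteristic $\neq 2$, and let $W^+=A\wr T^+$ be as described in the context. Then $W^+$ has the presentation with generators $a_1,\dots,a_m,t_1,\dots,t_n,u_1,\dots,u_n$ subject to the finitely many relations $[a_k,t_{j_1},t_{j_2},\dots,t_{j_s},a_l]=0$ for all $k,l\in\{1,\dots,m\}$, $s\ge 0$ and $1\le j_1<j_2<\dots<j_s\le n$ (for $s=0$ this reads $[a_k,a_l]=0$); $[t_i,t_j]=[t_i,u_j]=[u_i,u_j]=0$ for $1\le i,j\le n$; $[a_k,u_l]=[a_k,t_l,t_l]$ for $1\le k\le m$, $1\le l\le n$.
   Context: Left-normed brackets: $[y_1,\dots,y_n]=[[y_1,\dots,y_{n-1}],y_n]$. Let $A$ be an abelian Lie algebra with basis $a_1,\dots,a_m$ and $T$ an abelian Lie algebra with basis $t_1,\dots,t_n$. Let $U=k[t_1,\dots,t_n]$ (the universal enveloping algebra of $T$), regarded as an abelian Lie algebra under $[u,v]=uv-vu$. Let $u_i=t_i^2\in U$ and let $T^+\subset U$ be the $2n$-dimensional abelian Lie subalgebra spanned by $t_1,\dots,t_n,u_1,\dots,u_n$. Let $B$ be the free right $U$-module with basis $a_1,\dots,a_m$, which is a right Lie module for $T^+$ via $T^+\subset U$. Then $W^+=A\wr T^+$ is $B\oplus T^+$ as a vector space with bracket $[b_1+s_1,b_2+s_2]=(b_1s_2-b_2s_1)+[s_1,s_2]$ for $b_i\in B$, $s_i\in T^+$ (so $[s_1,s_2]=0$). In particular $[a_k,u_l]=a_kt_l^2$. *)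

From HB Require Import structures.
From mathcomp Require Import all_boot all_order all_algebra.
From mathcomp Require Import mpoly.
Set Implicit Arguments. Unset Strict Implicit. Unset Printing Implicit Defensive.
Import GRing.Theory.
Local Open Scope ring_scope.

Record lieAlg (K : fieldType) := LieAlg {
  lie_sort :> lmodType K;
  lie_br : lie_sort -> lie_sort -> lie_sort;
  lie_brDl : forall x y z, lie_br (x + y) z = lie_br x z + lie_br y z;
  lie_brZl : forall (c : K) x y, lie_br (c *: x) y = c *: lie_br x y;
  lie_brDr : forall x y z, lie_br x (y + z) = lie_br x y + lie_br x z;
  lie_brZr : forall (c : K) x y, lie_br x (c *: y) = c *: lie_br x y;
  lie_brxx : forall x, lie_br x x = 0;
  lie_jacobi : forall x y z,
    lie_br x (lie_br y z) + lie_br y (lie_br z x) + lie_br z (lie_br x y) = 0 }.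

Definition lnbr (V : Type) (br : V -> V -> V) (x : V) (ys : seq V) : V :=
  foldl br x ys.

Definition W_relations (K : fieldType) (V : lmodType K) (br : V -> V -> V)
  (m n : nat) (a : 'I_m -> V) (t u : 'I_n -> V) : Prop :=
  [/\ (forall (k l : 'I_m) (js : seq 'I_n),
         sorted (fun i j : 'I_n => (i < j)%N) js ->
         lnbr br (a k) (map t js ++ [:: a l]) = 0),
      (forall i j : 'I_n, br (t i) (t j) = 0 /\ br (t i) (u j) = 0
                           /\ br (u i) (u j) = 0) &
      (forall (k : 'I_m) (l : 'I_n), br (a k) (u l) = lnbr br (a k) [:: t l; t l])].

Definition lie_generated (K : fieldType) (V : lmodType K) (br : V -> V -> V)
  (gen : V -> Prop) : Prop :=
  forall P : V -> Prop,
    P 0 -> (forall x y, P x -> P y -> P (x + y)) ->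
    (forall (c : K) x, P x -> P (c *: x)) ->
    (forall x y, P x -> P y -> P (br x y)) ->
    (forall x, gen x -> P x) -> forall w, P w.

Definition lie_hom (K : fieldType) (V : lmodType K) (br : V -> V -> V)
  (L : lieAlg K) (f : V -> lie_sort L) : Prop :=
  [/\ forall x y, f (x + y) = f x + f y,
      forall (c : K) x, f (c *: x) = c *: f x &
      forall x y, f (br x y) = @lie_br K L (f x) (f y)].

(* (V, br) has the presentation with generators a, t, u and the relations
   W_relations: the generators satisfy the relations, generate V, and
   every Lie algebra with elements satisfying the relations receives a
   Lie homomorphism from V sending generators to those elements.
   (Universal property of the quotient of the free Lie algebra.) *)
Definition has_W_presentation (K : fieldType) (V : lmodType K)
  (br : V -> V -> V) (m n : nat) (a : 'I_m -> V) (t u : 'I_n -> V) : Prop :=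
  [/\ W_relations br a t u,
      lie_generated br (fun w => (exists k, w = a k) \/ (exists i, w = t i)
                                 \/ (exists i, w = u i)) &
      forall (L : lieAlg K) (a' : 'I_m -> lie_sort L) (t' u' : 'I_n -> lie_sort L),
        W_relations (@lie_br K L) a' t' u' ->
        exists f : V -> lie_sort L, [/\ lie_hom br f,
          (forall k, f (a k) = a' k), (forall i, f (t i) = t' i) &
          (forall i, f (u i) = u' i)]].

(* B = U^m (free right U-module on a_1..a_m), U = k[t_1..t_n].
   T^+ has basis t_1..t_n, u_1..u_n; an element sum c_i t_i + d_i u_i is
   stored as the pair of coordinate vectors (c, d).
   W^+ = B (+) T^+. *)
Definition Wplus (K : fieldType) (m n : nat) : lmodType K :=
  ({ffun 'I_m -> {mpoly K[n]}} * ({ffun 'I_n -> K^o} * {ffun 'I_n -> K^o}))%type.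

Definition Tval (K : fieldType) (n : nat) (s : {ffun 'I_n -> K^o} * {ffun 'I_n -> K^o})
  : {mpoly K[n]} :=
  \sum_(i < n) (s.1 i *: 'X_i + s.2 i *: 'X_i ^+ 2).

(* [b1 + s1, b2 + s2] = (b1 s2 - b2 s1) + [s1, s2], with [s1, s2] = 0. *)
Definition Wbr (K : fieldType) (m n : nat) (w1 w2 : Wplus K m n) : Wplus K m n :=
  ([ffun k => w1.1 k * Tval w2.2 - w2.1 k * Tval w1.2], 0).

Definition Wa (K : fieldType) (m n : nat) (k : 'I_m) : Wplus K m n :=
  ([ffun j => if j == k then 1 else 0], 0).
Definition Wt (K : fieldType) (m n : nat) (i : 'I_n) : Wplus K m n :=
  (0, ([ffun j => if j == i then 1 else 0], 0)).
Definition Wu (K : fieldType) (m n : nat) (i : 'I_n) : Wplus K m n :=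
  (0, (0, [ffun j => if j == i then 1 else 0])).

From HB Require Import structures.
From mathcomp Require Import all_boot all_order all_algebra.
From mathcomp Require Import ssrcomplements mpoly.
Set Implicit Arguments. Unset Strict Implicit. Unset Printing Implicit Defensive.
Import GRing.Theory.
Local Open Scope ring_scope.

(* Let D_i be the right bracket with t_i.  In a Lie algebra L containing
   elements a, t, u that satisfy the relations, [t_i, t_j] = 0 makes the D_i
   commute and [t_i, u_j] = 0 makes them commute with the bracket with u_j, so
   L becomes a right module over U = k[t_1..t_n], x.p := p(D) x, in which
   a_k.t_l^2 = [a_k, u_l].  The key fact is that all the a_k.t^mu commute.
   By the Jacobi identity a letter D_i moves across [a_k D^s1, a_l D^s2] at
   the cost of a sign once the shorter bracket vanishes, which reduces
   everything to [a_k, a_l D^s].  If s has no repeated letter this is a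
   defining relation; if t_i occurs twice, rewriting D_i^2 as the bracket with
   u_i and moving it across shows that the bracket is its own opposite, hence
   zero since 2 != 0 in k.  Consequently b + s |-> sum_k a_k.b_k + s is a Lie
   homomorphism from W^+ to L; and W^+ is generated by a, t, u because
   a_k t^mu = [a_k, t_1, .., t_1, t_2, ...]. *)

Section LieAlgebraFacts.
Variables (K : fieldType) (L : lieAlg K).
Local Notation br := (@lie_br K L).

Lemma lie_br0l y : br 0 y = 0.
Proof. by apply/(addIr (br 0 y)); rewrite -lie_brDl !add0r. Qed.

Lemma lie_br0r x : br x 0 = 0.
Proof. by apply/(addIr (br x 0)); rewrite -lie_brDr !add0r. Qed.

Lemma lie_brNr x y : br x (- y) = - br x y.
Proof. by apply/(addrI (br x y)); rewrite -lie_brDr !subrr lie_br0r. Qed.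

Lemma lie_brC x y : br x y = - br y x.
Proof.
apply/eqP; rewrite -addr_eq0; apply/eqP.
have := lie_brxx (x + y).
by rewrite lie_brDl !lie_brDr !lie_brxx add0r addr0.
Qed.

Lemma lie_brNl x y : br (- x) y = - br x y.
Proof. by rewrite lie_brC lie_brNr lie_brC opprK. Qed.

Lemma lie_br_derivation x y z : br (br x y) z = br (br x z) y + br x (br y z).
Proof.
apply/eqP; rewrite eq_sym -subr_eq0 -(lie_jacobi x y z).
rewrite [br z (br x y)]lie_brC [br y (br z x)]lie_brC [br z x]lie_brC lie_brNl.
by rewrite !opprK [br x _ + _]addrC.
Qed.

Lemma lie_br_transfer x y z : br x y = 0 -> br (br x z) y = - br x (br y z).
Proof.
move=> xy0; apply/eqP; rewrite -addr_eq0; apply/eqP.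
by rewrite -lie_br_derivation xy0 lie_br0l.
Qed.

Lemma lie_br_suml (I : Type) (r : seq I) (P : pred I) (F : I -> L) y :
  br (\sum_(i <- r | P i) F i) y = \sum_(i <- r | P i) br (F i) y.
Proof. exact: (big_morph (br^~ y) (fun u v => lie_brDl u v y) (lie_br0l y)). Qed.

Lemma lie_br_sumr (I : Type) (r : seq I) (P : pred I) (F : I -> L) x :
  br x (\sum_(i <- r | P i) F i) = \sum_(i <- r | P i) br x (F i).
Proof. exact: (big_morph (br x) (lie_brDr x) (lie_br0r x)). Qed.

Definition lie_adr (y : L) (x : L) : L := br x y.

Fact lie_adr_is_linear y : linear (lie_adr y).
Proof. by move=> c x z; rewrite /lie_adr lie_brDl lie_brZl. Qed.

End LieAlgebraFacts.

HB.instance Definition _ (K : fieldType) (L : lieAlg K) (y : L) :=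
  GRing.isLinear.Build K L L *:%R (lie_adr y) (lie_adr_is_linear y).

Lemma eq_oppr_eq0 (K : fieldType) (V : lmodType K) (x : V) :
  2%:R != 0 :> K -> x = - x -> x = 0.
Proof.
move=> two_neq0 xN; have /eqP : 2%:R *: x = 0 by rewrite scaler_nat mulr2n {2}xN subrr.
by rewrite scaler_eq0 (negbTE two_neq0) => /eqP.
Qed.

Lemma not_uniq_perm_dup (T : eqType) (s : seq T) :
  ~~ uniq s -> exists x r, perm_eq s (x :: x :: r).
Proof.
elim: s => [//|y s IHs] /=; rewrite negb_and negbK => /orP[ys | /IHs[x [r sr]]].
  by exists y, (rem y s); rewrite perm_cons perm_to_rem.
exists x, (y :: r); rewrite -(perm_cons y) in sr; apply: perm_trans sr _.
by apply/permPl; exact: (perm_catCA [:: y] [:: x; x] r).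
Qed.

Section IteratedMaps.
Variables (T : Type) (I : eqType) (D : I -> T -> T).

Definition iter_seq (s : seq I) (x : T) : T := foldl (fun y i => D i y) x s.

Lemma iter_seq_cons i s x : iter_seq (i :: s) x = iter_seq s (D i x).
Proof. by []. Qed.

Lemma iter_seq_comm (f : T -> T) : (forall i x, f (D i x) = D i (f x)) ->
  forall s x, f (iter_seq s x) = iter_seq s (f x).
Proof. by move=> fD; elim=> [//|i s IHs] x; rewrite !iter_seq_cons IHs fD. Qed.

Lemma iter_seq_cat s1 s2 x : iter_seq (s1 ++ s2) x = iter_seq s2 (iter_seq s1 x).
Proof. exact: foldl_cat. Qed.

Hypothesis DC : forall i j x, D i (D j x) = D j (D i x).

Lemma iter_seq_perm s1 s2 x : perm_eq s1 s2 -> iter_seq s1 x = iter_seq s2 x.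
Proof.
elim: s1 s2 x => [|i s1 IHs] s2 x; first by rewrite perm_sym => /perm_nilP ->.
move=> s12; have i_s2 : i \in s2 by rewrite -(perm_mem s12) mem_head.
move: s12; case/splitPr: i_s2 => s2a s2b s12.
rewrite iter_seq_cat !iter_seq_cons (iter_seq_comm (DC i)) -iter_seq_cat.
apply: IHs; rewrite -(perm_cons i); apply: perm_trans s12 _.
by rewrite -[i :: s2b]cat1s perm_catCA.
Qed.

End IteratedMaps.

Section MonomialSeq.
Variable n : nat.

Definition mnm_seq (mu : 'X_{1..n}) : seq 'I_n :=
  flatten [seq nseq (mu i) i | i <- enum 'I_n].

Lemma count_mnm_seq (P : pred 'I_n) (mu : 'X_{1..n}) :
  count P (mnm_seq mu) = (\sum_(i < n) P i * mu i)%N.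
Proof.
rewrite count_flatten sumnE !big_map -enumT big_enum /=.
by apply: eq_bigr => i _; rewrite count_nseq.
Qed.

Lemma mnm_seq0 : mnm_seq 0%MM = [::].
Proof. by rewrite /mnm_seq; elim: (enum 'I_n) => //= i s ->; rewrite mnm0E. Qed.

Lemma perm_mnm_seqDU (mu : 'X_{1..n}) i :
  perm_eq (mnm_seq (mu + U_(i))%MM) (i :: mnm_seq mu).
Proof.
apply/permP => P; rewrite /= !count_mnm_seq addnC.
rewrite (eq_bigr (fun j => P j * mu j + P j * (i == j))%N); last first.
  by move=> j _; rewrite mnmDE mnm1E mulnDr.
rewrite big_split /=; congr (_ + _)%N.
rewrite (bigD1 i) //= eqxx muln1 big1 ?addn0 // => j /negbTE.
by rewrite eq_sym => ->; rewrite muln0.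
Qed.

Lemma prod_mnm_seq (R : comNzRingType) (mu : 'X_{1..n}) :
  \prod_(i <- mnm_seq mu) 'X_i = 'X_[mu] :> {mpoly R[n]}.
Proof.
rewrite mpolyXE_id big_flatten big_map big_enum /=.
apply: eq_bigr => i _; rewrite big_nseq.
by elim: (mu i) => //= k ->; rewrite exprS.
Qed.

End MonomialSeq.

Section MpolyAction.
Variables (K : fieldType) (V : lmodType K) (n : nat) (D : 'I_n -> V -> V).
Hypothesis DC : forall i j x, D i (D j x) = D j (D i x).

Definition mnm_act (mu : 'X_{1..n}) : V -> V := iter_seq D (mnm_seq mu).

Definition mpoly_act (p : {mpoly K[n]}) (x : V) : V :=
  \sum_(mu <- msupp p) p@_mu *: mnm_act mu x.

Lemma mpoly_act_bounded p x b : (msize p <= b)%N ->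
  mpoly_act p x = \sum_(mu : 'X_{1..n < b}) p@_mu *: mnm_act mu x.
Proof.
move=> le_pb; rewrite /mpoly_act (big_mksub 'X_{1..n < b}) ?msupp_uniq //=.
  by rewrite big_rmcond //= => mu /memN_msupp_eq0 ->; rewrite scale0r.
by move=> mu /msize_mdeg_lt /leq_trans; apply.
Qed.

Lemma mpoly_actD p q x : mpoly_act (p + q) x = mpoly_act p x + mpoly_act q x.
Proof.
pose b := maxn (msize (p + q)) (maxn (msize p) (msize q)).
rewrite !(@mpoly_act_bounded _ x b) ?leq_max ?leqnn ?orbT // -big_split /=.
by apply: eq_bigr => mu _; rewrite mcoeffD scalerDl.
Qed.

Lemma mpoly_actZ c p x : mpoly_act (c *: p) x = c *: mpoly_act p x.
Proof.
pose b := maxn (msize (c *: p)) (msize p).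
rewrite !(@mpoly_act_bounded _ x b) ?leq_max ?leqnn ?orbT // scaler_sumr.
by apply: eq_bigr => mu _; rewrite mcoeffZ scalerA.
Qed.

Lemma mpoly_act0 x : mpoly_act 0 x = 0.
Proof. by rewrite /mpoly_act msupp0 big_nil. Qed.

Lemma mpoly_act_sum (I : Type) (r : seq I) (P : pred I) (F : I -> {mpoly K[n]}) x :
  mpoly_act (\sum_(i <- r | P i) F i) x = \sum_(i <- r | P i) mpoly_act (F i) x.
Proof.
exact: (big_morph (mpoly_act^~ x) (fun p q => mpoly_actD p q x) (mpoly_act0 x)).
Qed.

Lemma mpoly_actX mu x : mpoly_act 'X_[mu] x = mnm_act mu x.
Proof. by rewrite /mpoly_act msuppX big_seq1 mcoeffX eqxx scale1r. Qed.

Lemma mpoly_act1 x : mpoly_act 1 x = x.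
Proof. by rewrite -mpolyX0 mpoly_actX /mnm_act mnm_seq0. Qed.

Lemma mnm_actDU mu i x : mnm_act (mu + U_(i))%MM x = mnm_act mu (D i x).
Proof. by rewrite /mnm_act (iter_seq_perm DC _ (perm_mnm_seqDU mu i)). Qed.

Lemma mpoly_actMX p i x : mpoly_act (p * 'X_i) x = mpoly_act p (D i x).
Proof.
rewrite {1}[p]mpolyE mulr_suml mpoly_act_sum; apply: eq_bigr => mu _.
by rewrite -scalerAl -mpolyXD mpoly_actZ mpoly_actX mnm_actDU.
Qed.

Lemma mpoly_act_comm (f : {linear V -> V}) :
  (forall i x, f (D i x) = D i (f x)) ->
  forall p x, f (mpoly_act p x) = mpoly_act p (f x).
Proof.
move=> fD p x; rewrite linear_sum; apply: eq_bigr => mu _.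
by rewrite linearZ /mnm_act (iter_seq_comm fD).
Qed.

End MpolyAction.

Section PresentedLieAlgebra.
Variables (K : fieldType) (L : lieAlg K) (m n : nat).
Variables (a : 'I_m -> L) (t u : 'I_n -> L).
Hypothesis two_neq0 : 2%:R != 0 :> K.
Hypothesis rel : W_relations (@lie_br K L) a t u.
Local Notation br := (@lie_br K L).
Local Notation adt i := (lie_adr (t i)).
Local Notation adu i := (lie_adr (u i)).
Local Notation ad_ts := (iter_seq (fun i => adt i)).

Lemma rel_tt i j : br (t i) (t j) = 0.
Proof. by case: rel => _ /(_ i j) [-> _]. Qed.

Lemma rel_tu i j : br (t i) (u j) = 0.
Proof. by case: rel => _ /(_ i j) [_ [-> _]]. Qed.

Lemma rel_uu i j : br (u i) (u j) = 0.
Proof. by case: rel => _ /(_ i j) [_ [_ ->]]. Qed.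

Lemma rel_au k i : adu i (a k) = adt i (adt i (a k)).
Proof. by case: rel => _ _ /(_ k i). Qed.

Lemma adtC i j x : adt i (adt j x) = adt j (adt i x).
Proof. by rewrite /lie_adr lie_br_derivation rel_tt lie_br0r addr0. Qed.

Lemma adu_adt i j x : adu i (adt j x) = adt j (adu i x).
Proof. by rewrite /lie_adr lie_br_derivation rel_tu lie_br0r addr0. Qed.

Lemma lnbr_ad_ts x s y : lnbr br x (map t s ++ [:: y]) = br (ad_ts s x) y.
Proof.
rewrite /lnbr foldl_cat /=; congr br.
by elim: s x => //= i s IHs x; rewrite IHs.
Qed.

Definition orbit_br k l s1 s2 := br (ad_ts s1 (a k)) (ad_ts s2 (a l)).

Lemma orbit_br_shift k l i s1 s2 : orbit_br k l s1 s2 = 0 ->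
  orbit_br k l (i :: s1) s2 = - orbit_br k l s1 (i :: s2).
Proof.
rewrite /orbit_br !iter_seq_cons -!(iter_seq_comm (adtC i)).
exact: lie_br_transfer.
Qed.

Lemma orbit_br_uniq k l s : uniq s -> orbit_br k l [::] s = 0.
Proof.
move=> s_uniq; pose s' := sort (fun i j : 'I_n => (i <= j)%N) s.
have s'_lt : sorted (fun i j : 'I_n => (i < j)%N) s'.
  have := ltn_sorted_uniq_leq (map val s').
  rewrite !sorted_map (map_inj_uniq val_inj) sort_uniq s_uniq /= => ->.
  by apply: sort_sorted => i j; apply: leq_total.
case: rel => arel _ _; have := arel l k s' s'_lt.
rewrite lnbr_ad_ts (iter_seq_perm adtC _ (permEl (perm_sort _ s))) => lk0.
by rewrite /orbit_br lie_brC lk0 oppr0.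
Qed.

Lemma orbit_br_square k l i r : orbit_br k l [::] r = 0 ->
  orbit_br k l [::] (i :: i :: r) = - orbit_br k l [:: i; i] r.
Proof.
rewrite /orbit_br !iter_seq_cons /= -!rel_au -(iter_seq_comm (adu_adt i)) => kr0.
by rewrite (lie_br_transfer _ kr0) opprK.
Qed.

Lemma orbit_br_nil k l s : orbit_br k l [::] s = 0.
Proof.
move: {2}(size s) (leqnn (size s)) => N; elim: N s k l => [|N IHN] s k l.
  by rewrite leqn0 => /nilP ->; apply: orbit_br_uniq.
move=> s_le; have [/orbit_br_uniq //|/not_uniq_perm_dup[i [r sr]]] := boolP (uniq s).
have r_le : (size r < N)%N by move: s_le; rewrite (perm_size sr).
have r0 : orbit_br k l [::] r = 0 by apply: IHN; apply: ltnW.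
have ir0 : orbit_br k l [::] (i :: r) = 0 by apply: IHN.
have ir1 : orbit_br k l [:: i] r = 0 by rewrite orbit_br_shift // ir0 oppr0.
have -> : orbit_br k l [::] s = orbit_br k l [::] (i :: i :: r).
  by rewrite /orbit_br (iter_seq_perm adtC _ sr).
apply: (eq_oppr_eq0 two_neq0).
by rewrite {1}(orbit_br_square i r0) (orbit_br_shift _ ir1) (orbit_br_shift _ ir0) opprK.
Qed.

Lemma orbit_br_eq0 k l s1 s2 : orbit_br k l s1 s2 = 0.
Proof.
elim: s1 s2 => [|i s1 IHs] s2; first exact: orbit_br_nil.
by rewrite orbit_br_shift ?IHs ?oppr0.
Qed.

Local Notation act := (mpoly_act (fun i => adt i)).

Lemma adt_act i p x : adt i (act p x) = act p (adt i x).
Proof. exact: (@mpoly_act_comm _ _ _ _ (lie_adr (t i)) (adtC i)). Qed.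

Lemma adu_act i p x : adu i (act p x) = act p (adu i x).
Proof. exact: (@mpoly_act_comm _ _ _ _ (lie_adr (u i)) (adu_adt i)). Qed.

Lemma act_a_commute p q k l : br (act p (a k)) (act q (a l)) = 0.
Proof.
rewrite lie_br_suml big1 // => mu _; rewrite lie_brZl lie_br_sumr big1 ?scaler0 //.
by move=> nu _; rewrite lie_brZr [br _ _]orbit_br_eq0 scaler0.
Qed.

End PresentedLieAlgebra.

Lemma ffun_delta_sum (I : finType) (V : nmodType) (f : {ffun I -> V}) :
  \sum_i [ffun j => if j == i then f i else 0] = f.
Proof.
apply/ffunP => j; rewrite sum_ffunE (bigD1 j) //= ffunE eqxx big1 ?addr0 // => i.
by rewrite ffunE eq_sym => /negbTE ->.
Qed.

Section WplusFacts.
Variables (K : fieldType) (m n : nat).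
Local Notation W := (Wplus K m n).
Local Notation Wbr := (@Wbr K m n).
Local Notation Tplus := ({ffun 'I_n -> K^o} * {ffun 'I_n -> K^o})%type.

Lemma Tval0 : Tval (0 : Tplus) = 0.
Proof. by rewrite /Tval big1 // => i _; rewrite !ffunE !scale0r addr0. Qed.

Lemma Tval_Wt (i : 'I_n) : Tval (Wt K m i).2 = 'X_i.
Proof.
rewrite /Tval (bigD1 i) //= big1 => [|j /negbTE ji]; last by rewrite !ffunE ji !scale0r addr0.
by rewrite !ffunE eqxx scale1r scale0r !addr0.
Qed.

Lemma Tval_Wu (i : 'I_n) : Tval (Wu K m i).2 = 'X_i ^+ 2.
Proof.
rewrite /Tval (bigD1 i) //= big1 => [|j /negbTE ji]; last by rewrite !ffunE ji !scale0r addr0.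
by rewrite !ffunE eqxx scale1r scale0r add0r addr0.
Qed.

Definition Wb (k : 'I_m) (p : {mpoly K[n]}) : W := ([ffun j => if j == k then p else 0], 0).

Lemma Wb_is_linear k : linear (Wb k).
Proof.
move=> c p q; congr pair; last by rewrite /= scaler0 addr0.
by apply/ffunP => j; rewrite !ffunE; case: (j == k); rewrite ?scaler0 ?addr0.
Qed.

HB.instance Definition _ k :=
  GRing.isLinear.Build K {mpoly K[n]} W *:%R (Wb k) (Wb_is_linear k).

Lemma Wbr_Wb_Wb k l p q : Wbr (Wb k p) (Wb l q) = 0.
Proof.
by congr pair; apply/ffunP => j; rewrite !ffunE Tval0 !mulr0 subrr.
Qed.

Lemma Wbr_Wb_Wt k p (i : 'I_n) : Wbr (Wb k p) (Wt K m i) = Wb k (p * 'X_i).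
Proof.
rewrite /Wbr Tval_Wt Tval0; congr pair; apply/ffunP => j; rewrite !ffunE.
by case: (j == k); rewrite ?mul0r ?mulr0 ?subr0.
Qed.

Lemma Wbr_Wb_Wu k p (i : 'I_n) : Wbr (Wb k p) (Wu K m i) = Wb k (p * 'X_i ^+ 2).
Proof.
rewrite /Wbr Tval_Wu Tval0; congr pair; apply/ffunP => j; rewrite !ffunE.
by case: (j == k); rewrite ?mul0r ?mulr0 ?subr0.
Qed.

Lemma lnbr_Wb_Wt k p s :
  lnbr Wbr (Wb k p) (map (@Wt K m n) s) = Wb k (p * \prod_(i <- s) 'X_i).
Proof.
elim: s p => [|i s IHs] p /=; first by rewrite big_nil mulr1.
by rewrite Wbr_Wb_Wt IHs big_cons mulrA.
Qed.

Lemma W_relations_hold : W_relations Wbr (@Wa K m n) (@Wt K m n) (@Wu K m n).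
Proof.
split.
- move=> k l js _; rewrite /lnbr foldl_cat.
  rewrite -[foldl _ _ (map _ js)]/(lnbr Wbr (Wb k 1) _) lnbr_Wb_Wt.
  exact: Wbr_Wb_Wb.
- by move=> i j; split; last split; congr pair; apply/ffunP => q;
    rewrite !ffunE !mul0r subrr.
- move=> k l; rewrite /lnbr /= -[Wa K n k]/(Wb k 1) !Wbr_Wb_Wt Wbr_Wb_Wu.
  by rewrite expr2 mulrA.
Qed.

Lemma Wplus_decomp (w : W) :
  w = \sum_(k < m) Wb k (w.1 k) +
      \sum_(i < n) (w.2.1 i *: Wt K m i + w.2.2 i *: Wu K m i).
Proof.
case: w => b [c d] /=.
apply: injective_projections; [|apply: injective_projections];
  rewrite /= ?raddfD /= !raddf_sum /=.
- by rewrite [X in _ + X]big1 ?addr0 ?ffun_delta_sum // => i _; rewrite !scaler0 addr0.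
- rewrite big1 ?add0r // -[LHS]ffun_delta_sum; apply: eq_bigr => i _.
  by apply/ffunP => j; rewrite !ffunE scaler0 addr0; case: (j == i);
    [exact: esym (mulr1 _) | rewrite scaler0].
- rewrite big1 ?add0r // -[LHS]ffun_delta_sum; apply: eq_bigr => i _.
  by apply/ffunP => j; rewrite !ffunE scaler0 add0r; case: (j == i);
    [exact: esym (mulr1 _) | rewrite scaler0].
Qed.

Lemma W_generated : lie_generated Wbr (fun w => (exists k, w = @Wa K m n k) \/
   (exists i, w = @Wt K m n i) \/ (exists i, w = @Wu K m n i)).
Proof.
move=> P P0 PD PZ PB Pgen w.
have Psum I r (F : I -> W) : (forall i, P (F i)) -> P (\sum_(i <- r) F i).
  by move=> PF; apply: big_ind.
have PWbX k mu : P (Wb k 'X_[mu]).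
  rewrite -[X in Wb k X]mul1r -prod_mnm_seq -lnbr_Wb_Wt.
  have : P (Wb k 1) by apply: Pgen; left; exists k.
  elim: (mnm_seq mu) (Wb k 1) => //= i s IHs x Px; apply: IHs; apply: PB => //.
  by apply: Pgen; right; left; exists i.
rewrite (Wplus_decomp w); apply: (PD); apply: (Psum).
  move=> k; rewrite [w.1 k]mpolyE linear_sum; apply: (Psum) => mu.
  by rewrite linearZ; apply: PZ; apply: PWbX.
by move=> i; apply: (PD); apply: (PZ); apply: Pgen; right; [left|right]; exists i.
Qed.

End WplusFacts.

Section UniversalLift.
Variables (K : fieldType) (m n : nat) (L : lieAlg K).
Variables (a : 'I_m -> L) (t u : 'I_n -> L).
Hypothesis two_neq0 : 2%:R != 0 :> K.
Hypothesis rel : W_relations (@lie_br K L) a t u.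
Local Notation br := (@lie_br K L).
Local Notation act := (mpoly_act (fun i => lie_adr (t i))).

Definition liftB (b : {ffun 'I_m -> {mpoly K[n]}}) : L := \sum_(k < m) act (b k) (a k).

Definition liftT (s : {ffun 'I_n -> K^o} * {ffun 'I_n -> K^o}) : L :=
  \sum_(i < n) (s.1 i *: t i + s.2 i *: u i).

Definition liftW (w : Wplus K m n) : L := liftB w.1 + liftT w.2.

Lemma liftBD b1 b2 : liftB (b1 + b2) = liftB b1 + liftB b2.
Proof. by rewrite /liftB -big_split; apply: eq_bigr => k _; rewrite ffunE mpoly_actD. Qed.

Lemma liftBZ c b : liftB (c *: b) = c *: liftB b.
Proof. by rewrite /liftB scaler_sumr; apply: eq_bigr => k _; rewrite ffunE mpoly_actZ. Qed.

Lemma liftTD s1 s2 : liftT (s1 + s2) = liftT s1 + liftT s2.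
Proof.
rewrite /liftT -big_split; apply: eq_bigr => i _.
by rewrite !ffunE !scalerDl addrACA.
Qed.

Lemma liftTZ c s : liftT (c *: s) = c *: liftT s.
Proof.
rewrite /liftT scaler_sumr; apply: eq_bigr => i _.
by rewrite !ffunE scalerDr !scalerA.
Qed.

Lemma liftT0 : liftT 0 = 0.
Proof. by rewrite -(scale0r 0) liftTZ scale0r. Qed.

Lemma act_MTval p k s : act (p * Tval s) (a k) = br (act p (a k)) (liftT s).
Proof.
rewrite /Tval mulr_sumr mpoly_act_sum /liftT lie_br_sumr; apply: eq_bigr => i _.
rewrite mulrDr mpoly_actD lie_brDr -!scalerAr !mpoly_actZ !lie_brZr.
rewrite expr2 mulrA !(mpoly_actMX (adtC rel)) -(rel_au rel).
by rewrite -(adt_act rel) -(adu_act rel).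
Qed.

Lemma liftB_Tval b s : br (liftB b) (liftT s) = liftB [ffun k => b k * Tval s].
Proof. by rewrite /liftB lie_br_suml; apply: eq_bigr => k _; rewrite ffunE act_MTval. Qed.

Lemma liftB_commute b1 b2 : br (liftB b1) (liftB b2) = 0.
Proof.
rewrite lie_br_suml big1 // => k _; rewrite lie_br_sumr big1 // => l _.
exact: (act_a_commute two_neq0 rel).
Qed.

Lemma liftT_commute s1 s2 : br (liftT s1) (liftT s2) = 0.
Proof.
rewrite lie_br_suml big1 // => i _; rewrite lie_br_sumr big1 // => j _.
rewrite lie_brDl !lie_brDr !lie_brZl !lie_brZr.
rewrite (rel_tt rel) (rel_tu rel) (rel_uu rel) [br (u i) _]lie_brC (rel_tu rel).
by rewrite oppr0 !scaler0 !addr0.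
Qed.

Lemma liftW_hom : lie_hom (@Wbr K m n) liftW.
Proof.
split=> [x y | c x | x y]; rewrite /liftW.
- by rewrite liftBD liftTD addrACA.
- by rewrite liftBZ liftTZ scalerDr.
rewrite lie_brDl !lie_brDr liftB_commute liftT_commute add0r addr0.
rewrite liftB_Tval [br (liftT _) _]lie_brC liftB_Tval /= liftT0 addr0.
rewrite -scaleN1r -liftBZ -liftBD; congr liftB.
by apply/ffunP => k; rewrite !ffunE scaleN1r.
Qed.

Lemma liftW_a k : liftW (Wa K n k) = a k.
Proof.
rewrite /liftW liftT0 addr0 /liftB (bigD1 k) //= ffunE eqxx mpoly_act1.
by rewrite big1 ?addr0 // => j /negbTE jk; rewrite ffunE jk mpoly_act0.
Qed.

Lemma liftW_t i : liftW (Wt K m i) = t i.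
Proof.
rewrite /liftW /liftB big1 ?add0r => [|k _]; last by rewrite ffunE mpoly_act0.
rewrite /liftT (bigD1 i) //= big1 => [|j /negbTE ji]; last by rewrite !ffunE ji !scale0r addr0.
by rewrite !ffunE eqxx scale1r scale0r !addr0.
Qed.

Lemma liftW_u i : liftW (Wu K m i) = u i.
Proof.
rewrite /liftW /liftB big1 ?add0r => [|k _]; last by rewrite ffunE mpoly_act0.
rewrite /liftT (bigD1 i) //= big1 => [|j /negbTE ji]; last by rewrite !ffunE ji !scale0r addr0.
by rewrite !ffunE eqxx scale1r scale0r !add0r addr0.
Qed.

End UniversalLift.

Theorem proposition2 (k : fieldType) (m n : nat) (hk : 2%:R != 0 :> k) :
  has_W_presentation (@Wbr k m n) (@Wa k m n) (@Wt k m n) (@Wu k m n).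
Proof.
split; [exact: W_relations_hold | exact: W_generated |].
move=> L a t u rel; exists (liftW a t u); split.
- exact: liftW_hom.
- exact: liftW_a.
- exact: liftW_t.
- exact: liftW_u.
Qed.
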